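(* Let $K\subseteq\mathbb{R}^n$ be a proper polyhedral cone with representation $(H,V)$, let $\mathbf{e}\in\mathrm{int}(K)$, let $A\in\mathbb{R}^{n\times n}$ be $K$-Metzler, and let $c\in\mathbb{R}$. The following are equivalent: (i) $\mu_{\mathbf{e},K}(A)\le c$; (ii) $A\mathbf{e}\preceq_K c\,\mathbf{e}$; (iii) $HA\mathbf{e}\le cH\mathbf{e}$. If additionally $K$ is pointed and $\mathbf{e}^*\in\mathrm{int}(K^* )$, the following are equivalent: (iv) $\mu^{\mathrm{d}}_{\mathbf{e}^*,K^*}(A)\le c$; (v) $A^{\top}\mathbf{e}^*\preceq_{K^*}c\,\mathbf{e}^*$; (vi) $V^{\top}A^{\top}\mathbf{e}^*\le cV^{\top}\mathbf{e}^*$.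
   Context: A cone is a nonempty closed convex set $K\subseteq\mathbb{R}^n$ with $\lambda K\subseteq K$ for $\lambda\ge0$; proper: $\mathrm{int}(K)\ne\emptyset$; pointed: $K\cap(-K)=\{0\}$. Polyhedral with representation $(H,V)$: $K=\{x:Hx\ge0\}=\{Vy:y\ge0\}$. Preorder $x\preceq_K y\iff y-x\in K$; interval $[x,y]_K=\{z:x\preceq_Kz\preceq_Ky\}$. Dual cone $K^*=\{\phi\in\mathbb{R}^n:\langle\phi,x\rangle\ge0\ \forall x\in K\}$. $A$ is $K$-Metzler if $\langle\phi,Av\rangle\ge0$ whenever $\phi\in K^*$, $v\in K$, $\langle\phi,v\rangle=0$. Gauge seminorm: $\|v\|_{\mathbf{e},K}=\inf\{\lambda\ge0:v\in\lambda[-\mathbf{e},\mathbf{e}]_K\}$; dual gauge norm: $\|v\|^{\mathrm{d}}_{\mathbf{e}^*,K^*}=\max\{|\langle\eta,v\rangle|:\eta\in[-\mathbf{e}^*,\mathbf{e}^*]_{K^*}\}$. For a seminorm $|||\cdot|||$ on $\mathbb{R}^n$ with kernel $\mathrm{Ker}=\{x:|||x|||=0\}$, the induced seminorm of a matrix is $|||M|||=\sup\{|||Mx|||:|||x|||=1,\ x\perp\mathrm{Ker}\}$ and the matrix semi-measure is $\mu(M)=\lim_{h\to0^+}(|||I_n+hM|||-1)/h$. $\mu_{\mathbf{e},K}$ denotes the semi-measure of $\|\cdot\|_{\mathbf{e},K}$ and $\mu^{\mathrm{d}}_{\mathbf{e}^*,K^*}$ the matrix measure of $\|\cdot\|^{\mathrm{d}}_{\mathbf{e}^*,K^*}$.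 *)

From HB Require Import structures.
From mathcomp Require Import all_boot all_order all_algebra.
From mathcomp Require Import all_classical all_reals all_analysis.
Set Implicit Arguments. Unset Strict Implicit. Unset Printing Implicit Defensive.
Import Order.TTheory GRing.Theory Num.Theory.
Import numFieldNormedType.Exports.
Local Open Scope classical_set_scope.
Local Open Scope ring_scope.

Section Defs.
Variable R : realType.
Variable n : nat.

Definition dotv (x y : 'cV[R]_n) : R := (x^T *m y) 0 0.

Definition vle k (u v : 'cV[R]_k) : Prop := forall i, u i 0 <= v i 0.

Definition cle (K : set 'cV[R]_n) (x y : 'cV[R]_n) : Prop := K (y - x).

Definition cinterval (K : set 'cV[R]_n) (x y : 'cV[R]_n) : set 'cV[R]_n :=
  [set z | cle K x z /\ cle K z y].

Definition dual_cone (K : set 'cV[R]_n) : set 'cV[R]_n :=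
  [set phi | forall x, K x -> 0 <= dotv phi x].

Definition pointed (K : set 'cV[R]_n) : Prop :=
  forall x, K x -> K (- x) -> x = 0.

Definition metzler (K : set 'cV[R]_n) (A : 'M[R]_n) : Prop :=
  forall phi v, dual_cone K phi -> K v -> dotv phi v = 0 ->
    0 <= dotv phi (A *m v).

Definition gauge (K : set 'cV[R]_n) (e : 'cV[R]_n) (v : 'cV[R]_n) : R :=
  inf [set l : R | 0 <= l /\
        exists2 z, cinterval K (- e) e z & v = l *: z].

Definition dual_gauge (K : set 'cV[R]_n) (es : 'cV[R]_n) (v : 'cV[R]_n) : R :=
  sup [set `|dotv eta v| | eta in cinterval (dual_cone K) (- es) es].

Definition induced (N : 'cV[R]_n -> R) (M : 'M[R]_n) : R :=
  sup [set N (M *m x) | x in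
        [set x | N x = 1 /\ forall y, N y = 0 -> dotv x y = 0]].

(* matrix semi-measure: lim_{h -> 0+} (|||I + hM||| - 1)/h,
   taken in the extended reals (it may be -oo, e.g. for a zero seminorm) *)
Definition semi_measure (N : 'cV[R]_n -> R) (M : 'M[R]_n) : \bar R :=
  lim ((fun h : R => ((induced N (1%:M + h *: M) - 1) / h)%:E) @ (0:R)^'+).

End Defs.

From Pilot Require Import Defs.
From HB Require Import structures.
From mathcomp Require Import all_boot all_order all_algebra.
From mathcomp Require Import all_classical all_reals all_analysis.
From mathcomp Require Import ring lra.
Set Implicit Arguments. Unset Strict Implicit. Unset Printing Implicit Defensive.
Import Order.TTheory GRing.Theory Num.Theory.
Import numFieldNormedType.Exports.
Local Open Scope classical_set_scope.
Local Open Scope ring_scope.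

(* With the weights w := H e >= 0 the interval [-e,e]_K is {z : |H z| <= w}
   componentwise, so ||v||_{e,K} = max_i |(H v)_i| / w_i; dually
   [-e*,e*]_{K*} = {eta : |V^T eta| <= V^T e*}.  For small h > 0 the matrix
   I + hA maps K into K (this is where K-Metzler and the two representations
   enter), hence maps [-e,e]_K into [-(I+hA)e,(I+hA)e]_K, and (I+hA)^T acts
   likewise on K*.  So the induced seminorm of I + hA is 1 + h g, with g the
   largest ratio (H A e)_i / w_i, attained at e (moved orthogonally to
   Ker H); for the dual norm g is the largest ratio (V^T A^T e* )_j /
   (V^T e* )_j, attained at an extreme ray of K.  Hence mu(A) = g, and g <= c
   is exactly (iii), resp. (vi).  If all weights vanish the seminorm is zero,
   the semi-measure is -oo and the inequalities hold trivially. *)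

Section Matrices.
Variable R : realType.

Lemma mxDE k l (X Y : 'M[R]_(k, l)) i j : (X + Y) i j = X i j + Y i j.
Proof. by rewrite mxE. Qed.

Lemma mxNE k l (X : 'M[R]_(k, l)) i j : (- X) i j = - X i j.
Proof. by rewrite mxE. Qed.

Lemma mxZE k l (a : R) (X : 'M[R]_(k, l)) i j : (a *: X) i j = a * X i j.
Proof. by rewrite mxE. Qed.

Lemma mx0E k l i j : (0 : 'M[R]_(k, l)) i j = 0.
Proof. by rewrite mxE. Qed.

Lemma mulmx_shiftE k n (G : 'M[R]_(k, n)) (B : 'M[R]_n) (h : R) (x : 'cV[R]_n) i :
  (G *m ((1%:M + h *: B) *m x)) i 0 = (G *m x) i 0 + h * (G *m (B *m x)) i 0.
Proof. by rewrite mulmxDl mul1mx -scalemxAl mulmxDr -scalemxAr mxDE mxZE. Qed.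

Lemma trmx_shift n (B : 'M[R]_n) (h : R) :
  (1%:M + h *: B)^T = 1%:M + h *: B^T.
Proof. by apply/matrixP => i j; rewrite !mxE eq_sym. Qed.

Lemma mulmx_shift_le k n (G : 'M[R]_(k, n)) (B : 'M[R]_n) z (g h : R) :
  0 <= h -> vle (G *m (B *m z)) (g *: (G *m z)) ->
  vle (G *m ((1%:M + h *: B) *m z)) ((1 + h * g) *: (G *m z)).
Proof.
move=> h0 hB i; have := hB i; rewrite mulmx_shiftE !mxZE mulrDl mul1r lerD2l.
by rewrite -mulrA; apply: ler_wpM2l.
Qed.

Lemma row_mul_trmx_eq0 k (u : 'rV[R]_k) : u *m u^T = 0 -> u = 0.
Proof.
move=> /(congr1 (fun M : 'M[R]_1 => M 0 0)); rewrite mxE mx0E => hs.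
have hz : forall j, true -> u 0 j * u^T j 0 = 0.
  by apply: psumr_eq0P => // i _; rewrite mxE; exact: sqr_ge0.
apply/rowP => j; have := hz j isT; rewrite mxE mx0E.
by move/eqP; rewrite mulf_eq0 orbb => /eqP.
Qed.

(* e' is taken in the row space of H, the orthogonal complement of Ker H. *)
Lemma exists_preimage_orthogonal_kernel k n (H : 'M[R]_(k, n)) (e : 'cV[R]_n) :
  exists e' : 'cV[R]_n,
    H *m e' = H *m e /\ forall y, H *m y = 0 -> dotv e' y = 0.
Proof.
set P := H *m H^T.
have ker0 : (H :&: kermx H^T)%MS = 0.
  apply/row_matrixP => i; rewrite row0; set u := row i _.
  have uH : (u <= H)%MS := submx_trans (row_sub i _) (capmxSl _ _).
  have : (u <= kermx H^T)%MS := submx_trans (row_sub i _) (capmxSr _ _).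
  rewrite sub_kermx => /eqP uK.
  have [w uw] := submxP uH.
  apply: row_mul_trmx_eq0.
  rewrite {1}uw -mulmxA.
  have -> : H *m u^T = (u *m H^T)^T by rewrite trmx_mul trmxK.
  by rewrite uK trmx0 mulmx0.
have rkP : \rank P = \rank H.
  by have := mxrank_mul_ker H H^T; rewrite ker0 mxrank0 addn0.
have sub : (H^T <= P)%MS.
  case: (mxrank_leqif_sup (submxMl H H^T)) => _ <-.
  by rewrite -/P rkP mxrank_tr.
have [w hw] := submxP (submx_trans (submxMl e^T H^T) sub).
exists (w *m H)^T; split.
  apply: (can_inj (@trmxK _ _ _)).
  by rewrite !trmx_mul !trmxK hw mulmxA.
by move=> y hy; rewrite /dotv trmxK -mulmxA hy mulmx0 mx0E.
Qed.

End Matrices.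

Section InnerProduct.
Variables (R : realType) (n : nat).
Implicit Types (x y z : 'cV[R]_n).

Lemma dotvDr x y z : dotv z (x + y) = dotv z x + dotv z y.
Proof. by rewrite /dotv mulmxDr mxDE. Qed.

Lemma dotvZr (a : R) x z : dotv z (a *: x) = a * dotv z x.
Proof. by rewrite /dotv -scalemxAr mxZE. Qed.

Lemma dotvDl x y z : dotv (x + y) z = dotv x z + dotv y z.
Proof. by rewrite /dotv linearD /= mulmxDl mxDE. Qed.

Lemma dotvNl x z : dotv (- x) z = - dotv x z.
Proof. by rewrite /dotv linearN /= mulNmx mxNE. Qed.

Lemma dotvZl (a : R) x z : dotv (a *: x) z = a * dotv x z.
Proof. by rewrite /dotv linearZ /= -scalemxAl mxZE. Qed.

Lemma dotv_trmx (M : 'M[R]_n) x z : dotv (M^T *m x) z = dotv x (M *m z).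
Proof. by rewrite /dotv trmx_mul trmxK mulmxA. Qed.

End InnerProduct.

Section RealFacts.
Variable R : realType.

Lemma ler_eps_mul (x a y : R) :
  0 <= y -> (forall eps, 0 < eps -> x <= (a + eps) * y) -> x <= a * y.
Proof.
move=> y0 H; apply/ler_addgt0Pr => eps eps0.
have hy : 0 < y + 1 by lra.
have := H (eps / (y + 1)) (divr_gt0 eps0 hy).
rewrite mulrDl => h1; apply: (le_trans h1); rewrite lerD2l.
by rewrite mulrAC ler_pdivrMr // ler_pM2l //; lra.
Qed.

Lemma near0_affine_gt0 (a b : R) : 0 < a ->
  \forall h \near (0 : R)^'+, 0 < a + h * b.
Proof.
move=> a0.
have hb : 0 < a / (`|b| + 1) by rewrite divr_gt0 // ltr_wpDl.
near=> h.
have h0 : 0 < h by near: h; exact: nbhs_right_gt.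
have hl : h < a / (`|b| + 1) by near: h; exact: nbhs_right_lt.
have : h * (`|b| + 1) < a by rewrite -ltr_pdivlMr // ltr_wpDl.
have := ler_norm (- b); rewrite normrN => nb.
nra.
Unshelve. all: by end_near.
Qed.

Lemma max_slope k (a w : 'cV[R]_k) :
  (forall i, 0 <= w i 0) -> (forall i, w i 0 = 0 -> a i 0 = 0) ->
  (exists i, 0 < w i 0) ->
  exists g, (forall c, g <= c <-> vle a (c *: w)) /\
            exists2 i, 0 < w i 0 & a i 0 = g * w i 0.
Proof.
move=> w0 wa [i1 wi1].
have [i0 wi0 i0max] := @arg_maxP _ _ _ i1 (fun i => 0 < w i 0)
  (fun i => a i 0 / w i 0) wi1.
set g := a i0 0 / w i0 0.
have slope i : a i 0 <= g * w i 0.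
  case: (ltrgt0P (w i 0)) (w0 i) => // [wi|wi] _.
    by rewrite -ler_pdivrMr //; exact: i0max.
  by rewrite wi mulr0 wa.
exists g; split; last by exists i0; rewrite // /g divfK ?gt_eqF.
move=> c; split => [gc i|/(_ i0)].
  by rewrite mxZE; apply: le_trans (slope i) _; rewrite ler_wpM2r.
by rewrite mxZE -ler_pdivrMr.
Qed.

End RealFacts.

Section SemiMeasure.
Variables (R : realType) (n : nat).
Implicit Types (N : 'cV[R]_n -> R) (A M : 'M[R]_n).

Lemma induced_eq_attained N M (b : R) (x0 : 'cV[R]_n) :
  (forall x, N x = 1 -> N (M *m x) <= b) ->
  N x0 = 1 -> (forall y, N y = 0 -> dotv x0 y = 0) -> b <= N (M *m x0) ->
  Defs.induced N M = b.
Proof.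
move=> ub Nx0 x0perp lb; rewrite /Defs.induced.
have ne : [set N (M *m x) | x in [set x | N x = 1 /\
    forall y, N y = 0 -> dotv x y = 0]] !=set0.
  by exists (N (M *m x0)); exists x0.
apply/le_anti/andP; split.
  by apply: ge_sup => // _ [x [Nx _] <-]; exact: ub.
apply: (le_trans lb); apply: sup_upper_bound; last by exists x0.
by split => //; exists b => _ [x [Nx _] <-]; exact: ub.
Qed.

Lemma semi_measure_affine N A (g : R) :
  (\forall h \near (0 : R)^'+, Defs.induced N (1%:M + h *: A) = 1 + h * g) ->
  semi_measure N A = g%:E.
Proof.
move=> hN; rewrite /semi_measure; apply: cvg_lim => //.
apply: cvg_near_cst; near=> h.
have h0 : 0 < h by near: h; exact: nbhs_right_gt.
rewrite (near hN h) //; congr (_%:E).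
by rewrite addrC addKr mulrC mulKf ?gt_eqF.
Unshelve. all: by end_near.
Qed.

(* With no vector of seminorm 1 the sup defining the induced seminorm is the
   sup of the empty set, i.e. 0, so the difference quotient is -1/h. *)
Lemma semi_measure_Ny N A : (forall x, N x <> 1) -> semi_measure N A = -oo%E.
Proof.
move=> hN; rewrite /semi_measure; apply: cvg_lim => //.
have induced0 M : Defs.induced N M = 0.
  rewrite /Defs.induced; suff -> : [set N (M *m x) | x in [set x | N x = 1 /\
      forall y, N y = 0 -> dotv x y = 0]] = set0 by rewrite sup0.
  by apply/seteqP; split => // y [x [Nx _] _]; case: (hN x).
apply/cvgeNyPle => B.
have hB : 0 < (`|B| + 1)^-1 by rewrite invr_gt0 ltr_wpDl.
near=> h.
have h0 : 0 < h by near: h; exact: nbhs_right_gt.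
have hl : h < (`|B| + 1)^-1 by near: h; exact: nbhs_right_lt.
rewrite induced0 lee_fin sub0r mulN1r lerNl.
have : `|B| + 1 < h^-1 by rewrite -(invrK (`|B| + 1)) ltf_pV2 // ?posrE.
have := ler_norm (- B); rewrite normrN; lra.
Unshelve. all: by end_near.
Qed.

Lemma semi_measure_le_iff N A (P : R -> Prop) :
  (exists2 g, (forall c, g <= c <-> P c) &
     \forall h \near (0 : R)^'+, Defs.induced N (1%:M + h *: A) = 1 + h * g)
  \/ ((forall x, N x <> 1) /\ forall c, P c) ->
  forall c, (semi_measure N A <= c%:E)%E <-> P c.
Proof.
case=> [[g gP /semi_measure_affine ->]|[/semi_measure_Ny -> allP]] c.
  by rewrite lee_fin.
by split=> _; [exact: allP | exact: leNye].
Qed.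

End SemiMeasure.

Section Interior.
Variables (R : realType) (n : nat).

Lemma interior_line (S : set 'cV[R]_n) x v : interior S x ->
  exists2 t : R, 0 < t & forall s : R, `|s| <= t -> S (x + s *: v).
Proof.
move=> /nbhs0P /nbhs_norm0P [eps /= eps0 Heps].
have hv : 0 < `|v| + 1 by rewrite ltr_wpDl.
exists (eps / (2 * (`|v| + 1))); first by rewrite divr_gt0 // mulr_gt0.
move=> s hs; apply: Heps => /=; rewrite normrZ.
apply: (le_lt_trans (y := eps / (2 * (`|v| + 1)) * (`|v| + 1))).
  by apply: ler_pM => //; rewrite lerDl.
rewrite invfM mulrA -mulrA mulVf ?gt_eqF // mulr1 ltr_pdivrMr //; lra.
Qed.

Lemma interior_pm (S : set 'cV[R]_n) x v : interior S x ->
  exists2 t : R, 0 < t & S (x + t *: v) /\ S (x + (- t) *: v).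
Proof.
move=> /(interior_line v) [t t0 ht]; exists t => //.
by split; apply: ht; rewrite ?normrN ger0_norm // ltW.
Qed.

End Interior.

Section PolyhedralCone.
Variables (R : realType) (n k : nat) (G : 'M[R]_(k, n)) (S : set 'cV[R]_n).
Hypothesis hS : forall x, S x <-> forall i, 0 <= (G *m x) i 0.

Lemma cle_polyP x y : cle S x y <-> vle (G *m x) (G *m y).
Proof.
rewrite /cle hS /vle.
by split => h i; move: (h i); rewrite mulmxBr mxDE mxNE subr_ge0.
Qed.

Lemma cinterval_polyP z w :
  cinterval S (- z) z w <-> forall i, `|(G *m w) i 0| <= (G *m z) i 0.
Proof.
rewrite /cinterval /cle /= !hS; split.
  move=> [h1 h2] i; move: (h1 i) (h2 i).
  rewrite !mulmxDr !mulmxN !mxDE !mxNE opprK ler_norml => a b.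
  by apply/andP; split; lra.
move=> h; split => i; move: (h i);
  rewrite !mulmxDr !mulmxN !mxDE !mxNE ?opprK ler_norml => /andP[a b]; lra.
Qed.

Lemma cinterval_mul_bound (M : 'M[R]_n) z w (b : R) :
  (forall x, S x -> S (M *m x)) -> cinterval S (- z) z w ->
  vle (G *m (M *m z)) (b *: (G *m z)) ->
  forall i, `|(G *m (M *m w)) i 0| <= b * (G *m z) i 0.
Proof.
move=> MS [wz zw] hb i; apply: le_trans (_ : _ <= (G *m (M *m z)) i 0) _.
  have : cinterval S (- (M *m z)) (M *m z) (M *m w).
    rewrite /cinterval /cle /= -mulmxN -!mulmxBr.
    by split; apply: MS.
  by move/cinterval_polyP; apply.
by have := hb i; rewrite mxZE.
Qed.

Variable z : 'cV[R]_n.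
Hypothesis hz : interior S z.

Lemma interior_weight_ge0 i : 0 <= (G *m z) i 0.
Proof. by have /hS := interior_subset hz; apply. Qed.

(* An inequality of the description that is tight at the interior point z
   would be tight on a whole ball around z. *)
Lemma interior_weight0 i :
  (G *m z) i 0 = 0 -> forall x : 'cV[R]_n, (G *m x) i 0 = 0.
Proof.
move=> hi x; have [t t0 [/hS/(_ i) h1 /hS/(_ i) h2]] := interior_pm x hz.
move: h1 h2; rewrite !mulmxDr -!scalemxAr !mxDE !mxZE hi !add0r => h1 h2.
by apply/le_anti/andP; split; nra.
Qed.

Lemma interior_weight_cases : (exists i, 0 < (G *m z) i 0) \/ G *m z = 0.
Proof.
case: (pselect (exists i, 0 < (G *m z) i 0)) => [|wn]; [by left | right].
apply/matrixP => i j; rewrite ord1 mx0E; apply/le_anti.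
by rewrite interior_weight_ge0 andbT leNgt; apply/negP => wi; apply: wn; exists i.
Qed.

End PolyhedralCone.

Section PolyhedralRepresentation.
Variables (R : realType) (n m p : nat) (K : set 'cV[R]_n).
Variables (H : 'M[R]_(m, n)) (V : 'M[R]_(n, p)).
Hypothesis hH : forall x, K x <-> forall i, 0 <= (H *m x) i 0.
Hypothesis hV : K = [set V *m y | y in [set y | vle 0 y]].

Lemma dotv_row i x : dotv (row i H)^T x = (H *m x) i 0.
Proof. by rewrite /dotv trmxK -row_mul mxE. Qed.

Lemma row_in_dual i : dual_cone K (row i H)^T.
Proof. by move=> x /hH Kx; rewrite dotv_row. Qed.

Lemma col_in_cone j : K (col j V).
Proof.
rewrite hV colE; exists (delta_mx j 0) => //= i.
by rewrite !mxE ler0n.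
Qed.

Lemma dotv_mulV phi y :
  dotv phi (V *m y) = \sum_j (V^T *m phi) j 0 * y j 0.
Proof.
rewrite /dotv mulmxA -[phi^T *m V]trmxK trmx_mul trmxK mxE.
by apply: eq_bigr => j _; rewrite mxE.
Qed.

Lemma dotv_col phi j : dotv phi (col j V) = (V^T *m phi) j 0.
Proof.
by rewrite /dotv colE mulmxA -colE -[phi^T *m V]trmxK trmx_mul trmxK !mxE.
Qed.

Lemma dual_coneP phi : dual_cone K phi <-> forall j, 0 <= (V^T *m phi) j 0.
Proof.
split=> [hphi j|hj x]; first by rewrite -dotv_col; exact: hphi (col_in_cone j).
rewrite hV => -[y y0 <-]; rewrite dotv_mulV.
by apply: sumr_ge0 => j _; apply: mulr_ge0 => //; have := y0 j; rewrite mx0E.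
Qed.

Variable A : 'M[R]_n.
Hypothesis hA : metzler K A.

(* Ker H = K cap -K: apply the K-Metzler condition to l and -l. *)
Lemma metzler_lineality (l : 'cV[R]_n) : H *m l = 0 -> H *m (A *m l) = 0.
Proof.
move=> hl; have l0 i : (H *m l) i 0 = 0 by rewrite hl mx0E.
have Kl : K l by apply/hH => i; rewrite l0.
have Knl : K (- l) by apply/hH => i; rewrite mulmxN mxNE l0 oppr0.
apply/matrixP => i j; rewrite ord1 mx0E; apply/le_anti/andP; split.
  have := hA (row_in_dual i) Knl; rewrite !dotv_row mulmxN mxNE l0 oppr0.
  by rewrite !mulmxN mxNE oppr_ge0; apply.
by have := hA (row_in_dual i) Kl; rewrite !dotv_row l0; apply.
Qed.

(* Entrywise, H (I + hA) V = H V + h H A V, and where (H V)_ij = 0 the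
   K-Metzler property makes (H A V)_ij nonnegative. *)
Lemma metzler_near_preserves :
  \forall h \near (0 : R)^'+, forall x, K x -> K ((1%:M + h *: A) *m x).
Proof.
have entry_ge0 (i : 'I_m) (j : 'I_p) : \forall h \near (0 : R)^'+,
    0 <= (H *m V) i j + h * (H *m A *m V) i j.
  have ea : (H *m V) i j = dotv (row i H)^T (col j V).
    by rewrite dotv_row colE mulmxA -colE [RHS]mxE.
  have eb : (H *m A *m V) i j = dotv (row i H)^T (A *m col j V).
    by rewrite dotv_row colE !mulmxA -colE [RHS]mxE.
  have a0 : 0 <= (H *m V) i j by rewrite ea; exact: row_in_dual (col_in_cone j).
  case: (ltrgt0P ((H *m V) i j)) a0 => // [apos|az] _.
    by near=> h; apply: ltW; near: h; exact: near0_affine_gt0.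
  have b0 : 0 <= (H *m A *m V) i j.
    by rewrite eb; apply: hA (row_in_dual i) (col_in_cone j) _; rewrite -ea.
  near=> h.
  have h0 : 0 < h by near: h; exact: nbhs_right_gt.
  by rewrite az add0r mulr_ge0 // ltW.
have : \forall h \near (0 : R)^'+, forall ij : 'I_m * 'I_p,
    0 <= (H *m V) ij.1 ij.2 + h * (H *m A *m V) ij.1 ij.2.
  by apply: filter_forall => -[i j]; exact: entry_ge0.
apply: filterS => h hh x Kx.
have [y y0 <-] : [set V *m y | y in [set y | vle 0 y]] x by rewrite -hV.
apply/hH => i; rewrite mulmx_shiftE !mulmxA [(H *m V *m y) i 0]mxE.
rewrite [(H *m A *m V *m y) i 0]mxE big_distrr -big_split /=.
apply: sumr_ge0 => j _; rewrite mulrA -mulrDl mulr_ge0 //; first exact: (hh (i, j)).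
by have := y0 j; rewrite mx0E.
Unshelve. all: by end_near.
Qed.

End PolyhedralRepresentation.

Section Gauge.
Variables (R : realType) (n m : nat) (K : set 'cV[R]_n) (H : 'M[R]_(m, n)).
Hypothesis hH : forall x, K x <-> forall i, 0 <= (H *m x) i 0.
Variable e : 'cV[R]_n.
Hypothesis he : interior K e.

Let gauge_set (v : 'cV[R]_n) := [set l : R | 0 <= l /\
  exists2 z, cinterval K (- e) e z & v = l *: z].

Let gauge_set_bound v l : gauge_set v l ->
  forall i, `|(H *m v) i 0| <= l * (H *m e) i 0.
Proof.
move=> [l0 [z /(cinterval_polyP hH) hz ->]] i.
by rewrite -scalemxAr mxZE normrM ger0_norm // ler_wpM2l.
Qed.

Let gauge_set_pos v l : 0 < l ->
  (forall i, `|(H *m v) i 0| <= l * (H *m e) i 0) -> gauge_set v l.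
Proof.
move=> l0 hb; split; first exact: ltW.
exists (l^-1 *: v); last by rewrite scalerA mulfV ?gt_eqF // scale1r.
apply/(cinterval_polyP hH) => i.
by rewrite -scalemxAr mxZE normrM gtr0_norm ?invr_gt0 // ler_pdivrMl // hb.
Qed.

Let gauge_set_nonempty v : gauge_set v !=set0.
Proof.
have [t t0 [/hH h1 /hH h2]] := interior_pm v he.
exists t^-1; apply: gauge_set_pos; first by rewrite invr_gt0.
move=> i; move: (h1 i) (h2 i); rewrite !mulmxDr -!scalemxAr !mxDE !mxZE => a b.
rewrite mulrC ler_pdivlMr // -[t in _ * t]gtr0_norm // -normrM ler_norml.
by apply/andP; split; nra.
Qed.

Lemma gauge_le v l : 0 < l ->
  (forall i, `|(H *m v) i 0| <= l * (H *m e) i 0) -> gauge K e v <= l.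
Proof.
move=> l0 hb; apply: (ge_inf (E := gauge_set v)); last exact: gauge_set_pos.
by exists 0 => x [].
Qed.

Lemma gauge_bound v i : `|(H *m v) i 0| <= gauge K e v * (H *m e) i 0.
Proof.
apply: ler_eps_mul; first exact: (interior_weight_ge0 hH he).
move=> eps eps0; have [l hl ll] : exists2 l, gauge_set v l & l < gauge K e v + eps.
  by apply: inf_lt; [exact: gauge_set_nonempty | rewrite ltrDl].
apply: le_trans (gauge_set_bound hl i) _; apply: ler_wpM2r; last exact: ltW.
exact: (interior_weight_ge0 hH he).
Qed.

Lemma gauge_eq0 v : gauge K e v = 0 -> H *m v = 0.
Proof.
move=> v0; apply/matrixP => i j; rewrite ord1 mx0E.
by have := gauge_bound v i; rewrite v0 mul0r normr_le0 => /eqP.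
Qed.

End Gauge.

Section DualGauge.
Variables (R : realType) (n : nat) (K : set 'cV[R]_n) (e es : 'cV[R]_n).
Hypothesis he : interior K e.
Hypothesis hes : interior (dual_cone K) es.
Local Notation J := (cinterval (dual_cone K) (- es) es).

Lemma dual_interval_dot eta k : J eta -> K k -> `|dotv eta k| <= dotv es k.
Proof.
move=> [h1 h2] Kk; have := h1 k Kk; have := h2 k Kk.
rewrite !dotvDl !dotvNl opprK ler_norml => a b; apply/andP; split; lra.
Qed.

(* Writing 2 t v = (e + t v) - (e - t v) with e +- t v in K. *)
Lemma dual_interval_dot_bound v :
  exists2 t : R, 0 < t & forall eta, J eta -> t * `|dotv eta v| <= dotv es e.
Proof.
have [t t0 [K1 K2]] := interior_pm v he; exists t => // eta Jeta.
have := dual_interval_dot Jeta K1; have := dual_interval_dot Jeta K2.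
rewrite !dotvDr !dotvZr !ler_norml => /andP[a b] /andP[c d].
by rewrite -[t in t * _]gtr0_norm // -normrM ler_norml; apply/andP; split; nra.
Qed.

Let dual_set v := [set `|dotv eta v| | eta in J].

Let dual_set_has_sup v : has_sup (dual_set v).
Proof.
split.
  exists `|dotv 0 v|; exists 0 => //.
  by split; rewrite /cle ?subr0 ?sub0r ?opprK; exact: interior_subset hes.
have [t t0 tb] := dual_interval_dot_bound v.
by exists (dotv es e / t) => _ [eta Jeta <-]; rewrite ler_pdivlMr // mulrC tb.
Qed.

Lemma dual_gauge_ge v eta : J eta -> `|dotv eta v| <= dual_gauge K es v.
Proof.
by move=> Jeta; apply: sup_upper_bound; [exact: dual_set_has_sup | exists eta].
Qed.

Lemma dual_gauge_le v (b : R) :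
  (forall eta, J eta -> `|dotv eta v| <= b) -> dual_gauge K es v <= b.
Proof.
move=> hb; apply: ge_sup; first by case: (dual_set_has_sup v).
by move=> _ [eta Jeta <-]; exact: hb.
Qed.

Lemma dual_gauge_eq0 x y : dual_gauge K es y = 0 -> dotv x y = 0.
Proof.
move=> y0; have [t t0 [J1 J2]] := interior_pm x hes.
have Jt : J (t *: x).
  by split; rewrite /cle; [rewrite opprK addrC | rewrite -scaleNr].
have := dual_gauge_ge y Jt; rewrite y0 normr_le0 dotvZl mulf_eq0 gt_eqF //=.
by move/eqP.
Qed.

Lemma dual_gauge_le0 v : dotv es e = 0 -> dual_gauge K es v <= 0.
Proof.
move=> ese; have [t t0 tb] := dual_interval_dot_bound v.
by apply: dual_gauge_le => eta /tb; rewrite ese pmulr_rle0.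
Qed.

End DualGauge.

Section MetzlerMeasure.
Variables (R : realType) (n m p : nat) (K : set 'cV[R]_n).
Variables (H : 'M[R]_(m, n)) (V : 'M[R]_(n, p)).
Hypothesis hH : forall x, K x <-> forall i, 0 <= (H *m x) i 0.
Hypothesis hV : K = [set V *m y | y in [set y | vle 0 y]].
Variable A : 'M[R]_n.
Hypothesis hA : metzler K A.
Variable e : 'cV[R]_n.
Hypothesis he : interior K e.

Lemma gauge_slope i1 : 0 < (H *m e) i1 0 -> exists2 g : R,
  (forall c, g <= c <-> cle K (A *m e) (c *: e)) &
  \forall h \near (0 : R)^'+,
    Defs.induced (gauge K e) (1%:M + h *: A) = 1 + h * g.
Proof.
move=> wi1.
have [g [gP [i0 wi0 gi0]]] := max_slope (interior_weight_ge0 hH he)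
  (fun i wi => interior_weight0 hH he wi (A *m e)) (ex_intro _ i1 wi1).
have [e' [He' e'perp]] := exists_preimage_orthogonal_kernel H e.
have HAe' : H *m (A *m e') = H *m (A *m e).
  apply/eqP; rewrite -subr_eq0 -!mulmxBr; apply/eqP/metzler_lineality => //.
  by rewrite mulmxBr He' subrr.
exists g.
  move=> c; apply: (iff_trans (gP c)); apply: iff_sym.
  by apply: (iff_trans (cle_polyP hH _ _)); rewrite scalemxAr.
near=> h.
have h0 : 0 < h by near: h; exact: nbhs_right_gt.
have g1 : 0 < 1 + h * g by near: h; exact: near0_affine_gt0.
have Mpres : forall x, K x -> K ((1%:M + h *: A) *m x).
  by near: h; exact: (metzler_near_preserves hH hV hA).
apply: (induced_eq_attained (x0 := e')).
- move=> x gx1; apply: gauge_le => // i.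
  have xint : cinterval K (- e) e x.
    apply/(cinterval_polyP hH) => j.
    by have := gauge_bound hH he x j; rewrite gx1 mul1r.
  apply: (cinterval_mul_bound hH Mpres xint); apply: mulmx_shift_le (ltW h0) _.
  exact/gP.
- apply/le_anti/andP; split.
    apply: gauge_le => // i.
    by rewrite He' mul1r ger0_norm // (interior_weight_ge0 hH he).
  have := gauge_bound hH he e' i1; rewrite He' ger0_norm ?(ltW wi1) //.
  by move=> hb; rewrite -(ler_pM2r wi1) mul1r.
- by move=> y /(gauge_eq0 hH he); exact: e'perp.
- have := gauge_bound hH he ((1%:M + h *: A) *m e') i0.
  rewrite mulmx_shiftE He' HAe' gi0.
  have -> : (H *m e) i0 0 + h * (g * (H *m e) i0 0) = (1 + h * g) * (H *m e) i0 0.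
    by ring.
  by rewrite normrM !gtr0_norm // ler_pM2r.
Unshelve. all: by end_near.
Qed.

Lemma gauge_degenerate : H *m e = 0 ->
  (forall x, gauge K e x <> 1) /\ forall x y, cle K x y.
Proof.
move=> w0; have Hx (x : 'cV[R]_n) : H *m x = 0.
  apply/matrixP => i j; rewrite ord1 mx0E; apply: (interior_weight0 hH he).
  by rewrite w0 mx0E.
split=> [x|x y]; last by apply/(cle_polyP hH) => i; rewrite !Hx.
have : gauge K e x <= 2^-1.
  by apply: gauge_le => // i; rewrite Hx w0 !mx0E normr0 mulr0.
by move=> + gx1; rewrite gx1; lra.
Qed.

Lemma gauge_measure_le_iff c :
  (semi_measure (gauge K e) A <= c%:E)%E <-> cle K (A *m e) (c *: e).
Proof.
move: c; apply: semi_measure_le_iff.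
have [[i wi]|w0] := interior_weight_cases hH he.
  by left; exact: gauge_slope wi.
right; have [gN cleT] := gauge_degenerate w0; split=> // c; exact: cleT.
Qed.

Variable es : 'cV[R]_n.
Hypothesis hes : interior (dual_cone K) es.
Local Notation J := (cinterval (dual_cone K) (- es) es).

Lemma dual_gauge_slope j1 : 0 < (V^T *m es) j1 0 -> exists2 g : R,
  (forall c, g <= c <-> cle (dual_cone K) (A^T *m es) (c *: es)) &
  \forall h \near (0 : R)^'+,
    Defs.induced (dual_gauge K es) (1%:M + h *: A) = 1 + h * g.
Proof.
move=> wj1; have hKd := dual_coneP hV.
have [g [gP [j0 wj0 gj0]]] := max_slope (interior_weight_ge0 hKd hes)
  (fun j wj => interior_weight0 hKd hes wj (A^T *m es)) (ex_intro _ j1 wj1).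
exists g.
  move=> c; apply: (iff_trans (gP c)); apply: iff_sym.
  by apply: (iff_trans (cle_polyP hKd _ _)); rewrite scalemxAr.
have Jes : J es.
  apply/(cinterval_polyP hKd) => j.
  by rewrite ger0_norm // (interior_weight_ge0 hKd hes).
set x0 := ((V^T *m es) j0 0)^-1 *: col j0 V.
near=> h.
have h0 : 0 < h by near: h; exact: nbhs_right_gt.
have g1 : 0 < 1 + h * g by near: h; exact: near0_affine_gt0.
have Mpres : forall x, K x -> K ((1%:M + h *: A) *m x).
  by near: h; exact: (metzler_near_preserves hH hV hA).
have Mdual phi : dual_cone K phi -> dual_cone K ((1%:M + h *: A)^T *m phi).
  by move=> hphi x Kx; rewrite dotv_trmx; apply: hphi; exact: Mpres.
apply: (induced_eq_attained (x0 := x0)).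
- move=> x gx1; apply: (dual_gauge_le he hes) => eta Jeta.
  have Jz : J ((1 + h * g)^-1 *: ((1%:M + h *: A)^T *m eta)).
    apply/(cinterval_polyP hKd) => j.
    rewrite -scalemxAr mxZE normrM gtr0_norm ?invr_gt0 // ler_pdivrMl //.
    apply: (cinterval_mul_bound hKd Mdual Jeta); rewrite trmx_shift.
    by apply: mulmx_shift_le (ltW h0) _; exact/gP.
  have := dual_gauge_ge he hes x Jz.
  rewrite dotvZl dotv_trmx gx1 normrM gtr0_norm ?invr_gt0 //.
  by rewrite ler_pdivrMl // mulr1.
- apply/le_anti/andP; split.
    apply: (dual_gauge_le he hes) => eta /(cinterval_polyP hKd) Jeta.
    rewrite dotvZr dotv_col normrM ger0_norm ?invr_ge0 ?(ltW wj0) //.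
    by rewrite ler_pdivrMl // mulr1.
  have := dual_gauge_ge he hes x0 Jes.
  by rewrite dotvZr dotv_col mulVf ?gt_eqF // normr1.
- by move=> y /(dual_gauge_eq0 he hes).
- have := dual_gauge_ge he hes ((1%:M + h *: A) *m x0) Jes.
  rewrite -dotv_trmx dotvZr dotv_col trmx_shift mulmx_shiftE gj0.
  have -> : ((V^T *m es) j0 0)^-1 * ((V^T *m es) j0 0 + h * (g * (V^T *m es) j0 0))
      = 1 + h * g by field; rewrite gt_eqF.
  by rewrite gtr0_norm.
Unshelve. all: by end_near.
Qed.

Lemma dual_gauge_degenerate : V^T *m es = 0 ->
  (forall x, dual_gauge K es x <> 1) /\ forall phi psi, cle (dual_cone K) phi psi.
Proof.
have hKd := dual_coneP hV.
move=> w0; have Vx (x : 'cV[R]_n) : V^T *m x = 0.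
  apply/matrixP => j k; rewrite ord1 mx0E; apply: (interior_weight0 hKd hes).
  by rewrite w0 mx0E.
split=> [x|phi psi]; last by apply/(cle_polyP hKd) => j; rewrite !Vx.
have ese : dotv es e = 0.
  have : K e := interior_subset he.
  rewrite {1}hV => -[y _ <-].
  by rewrite dotv_mulV big1 // => j _; rewrite w0 mx0E mul0r.
by move=> gx1; have := dual_gauge_le0 he hes x ese; rewrite gx1; lra.
Qed.

Lemma dual_gauge_measure_le_iff c :
  (semi_measure (dual_gauge K es) A <= c%:E)%E <->
  cle (dual_cone K) (A^T *m es) (c *: es).
Proof.
move: c; apply: semi_measure_le_iff.
have [[j wj]|w0] := interior_weight_cases (dual_coneP hV) hes.
  by left; exact: dual_gauge_slope wj.
right; have [gN cleT] := dual_gauge_degenerate w0; split=> // c; exact: cleT.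
Qed.

End MetzlerMeasure.

Theorem theorem1 (R : realType) (n m p : nat)
    (K : set 'cV[R]_n) (H : 'M[R]_(m, n)) (V : 'M[R]_(n, p))
    (hH : K = [set x | vle 0 (H *m x)])
    (hV : K = [set V *m y | y in [set y | vle 0 y]])
    (hproper : exists x, (interior K) x)
    (e : 'cV[R]_n) (he : (interior K) e)
    (A : 'M[R]_n) (hA : metzler K A) (c : R) :
  ((semi_measure (gauge K e) A <= c%:E)%E <-> cle K (A *m e) (c *: e)) /\
  (cle K (A *m e) (c *: e) <-> vle (H *m A *m e) (c *: (H *m e))) /\
  (pointed K -> forall es : 'cV[R]_n, (interior (dual_cone K)) es ->
     ((semi_measure (dual_gauge K es) A <= c%:E)%E <->
        cle (dual_cone K) (A^T *m es) (c *: es)) /\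
     (cle (dual_cone K) (A^T *m es) (c *: es) <->
        vle (V^T *m A^T *m es) (c *: (V^T *m es)))).
Proof.
have hK x : K x <-> forall i, 0 <= (H *m x) i 0.
  by rewrite hH /vle /=; split=> hx i; move: (hx i); rewrite mx0E.
split; first exact: (gauge_measure_le_iff hK hV hA he).
split; first by rewrite -mulmxA scalemxAr; exact: cle_polyP.
move=> _ es hes; split; first exact: (dual_gauge_measure_le_iff hK hV hA he hes).
by rewrite -mulmxA scalemxAr; exact: (cle_polyP (dual_coneP hV)).
Qed.
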